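(* Let $r\ge1$ and $k\ge1$ be integers. For any two states $\vec a,\vec b\in\mathcal H_{r,k}$, the Hanoi game on $\mathcal H_{r,k}$ transforms $\vec a$ into $\vec b$ in at most $2^k-1$ moves. The same holds for the Hanoi game on $\mathcal H^*_{r,k}$: for any $\vec a,\vec b\in\mathcal H^*_{r,k}$, $\vec a$ can be transformed into $\vec b$ in at most $2^k-1$ moves with all intermediate states in $\mathcal H^*_{r,k}$.
   Context: A Hanoi state is a finite sequence of nonnegative integers $\vec x=(x_1,\dots,x_k)$ with $x_i\ne x_{i-1}$ for all $i>1$. $\mathcal H_{r,k}$ is the set of Hanoi states in $\{0,1,\dots,r\}^k$, and $\mathcal H^*_{r,k}\subseteq\mathcal H_{r,k}$ is the set of proper Hanoi states, those with $x_1\ne0$. In the Hanoi game on $\mathcal H_{r,k}$ a state is transformed by moves of two types: (1) an adjustment changes $x_k$ to any other value in $\{0,1,\dots,r\}$ different from $x_{k-1}$ (if $k=1$, to any other value); (2) for $k\ge2$, an involution finds the longest final segment $(x_j,\dots,x_k)$ of $\vec x$ on which the entries alternate between the values $x_k$ and $x_{k-1}$, and swaps the values $x_k$ and $x_{k-1}$ throughout that segment (e.g. $(1,2,3,4)\mapsto(1,2,4,3)$, $(1,2,1,2)\mapsto(2,1,2,1)$). The Hanoi game on $\mathcal H^*_{r,k}$ is the same but all states involved must be proper (moves that would make $x_1=0$ are forbidden). *)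

From mathcomp Require Import all_boot.
Set Implicit Arguments. Unset Strict Implicit. Unset Printing Implicit Defensive.

Definition hanoi_state (r k : nat) (x : seq nat) : bool :=
  [&& size x == k, all (fun v => v <= r) x & sorted (fun a b => a != b) x].

Definition proper_state (r k : nat) (x : seq nat) : bool :=
  hanoi_state r k x && (head 0 x != 0).

(* Applied to rev x with p = x_k, q = x_{k-1}, this swaps x_k and x_{k-1}
   on the longest final segment alternating between them. *)
Fixpoint swap_alt (p q : nat) (s : seq nat) : seq nat :=
  match s with
  | y :: s' => if y == p then q :: swap_alt q p s' else s
  | [::] => [::]
  end.

Definition involution (x : seq nat) : seq nat :=
  match rev x with
  | a :: b :: _ => rev (swap_alt a b (rev x))
  | _ => x
  end.

Definition adjustment (r : nat) (x y : seq nat) : Prop :=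
  exists s a v, [/\ x = rcons s a, y = rcons s v, v <= r, v != a
                  & (s = [::] \/ v != last 0 s)].

Definition hanoi_move (r : nat) (x y : seq nat) : Prop :=
  adjustment r x y \/ (2 <= size x /\ y = involution x).

Definition game_step (r k : nat) (x y : seq nat) : Prop :=
  [/\ hanoi_state r k x, hanoi_state r k y & hanoi_move r x y].

Definition proper_game_step (r k : nat) (x y : seq nat) : Prop :=
  [/\ proper_state r k x, proper_state r k y & hanoi_move r x y].

Inductive nsteps (T : Type) (R : T -> T -> Prop) : nat -> T -> T -> Prop :=
  | nsteps0 x : nsteps R 0 x x
  | nstepsS m x y z : R x y -> nsteps R m y z -> nsteps R m.+1 x z.

From mathcomp Require Import all_boot zify.

Set Implicit Arguments.
Unset Strict Implicit.
Unset Printing Implicit Defensive.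

(* Strengthen the statement to the game on states of H_{r,k} whose first entry
   avoids a fixed value c (c = r+1 gives H_{r,k}, c = 0 gives H*_{r,k}) and
   induct on k.  If a and b start with the same value a1, only the tail moves,
   in the game whose first entry avoids a1.  Otherwise first drive the tail of
   a to the alternating state (b1, a1, b1, ...); then the whole state
   alternates between a1 and b1, so a single involution (an adjustment when
   k = 1) turns it into (b1, a1, b1, ...), from which the tail is driven to
   that of b.  This costs 2 (2^(k-1) - 1) + 1 = 2^k - 1 moves. *)

Lemma nsteps_add T (R : T -> T -> Prop) m1 m2 x y z :
  nsteps R m1 x y -> nsteps R m2 y z -> nsteps R (m1 + m2) x z.
Proof. by elim=> [//|m x' y' z' Rxy _ IH] /IH; apply: nstepsS. Qed.

Lemma nsteps_map T U (R : T -> T -> Prop) (R' : U -> U -> Prop) (f : T -> U) m x y :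
  (forall x y, R x y -> R' (f x) (f y)) -> nsteps R m x y -> nsteps R' m (f x) (f y).
Proof.
move=> Rf; elim=> [x'|m' x' y' z' Rxy _ IH]; first exact: nsteps0.
exact: nstepsS (Rf _ _ Rxy) IH.
Qed.

Lemma sub_nsteps T (R R' : T -> T -> Prop) m x y :
  (forall x y, R x y -> R' x y) -> nsteps R m x y -> nsteps R' m x y.
Proof. exact: (@nsteps_map _ _ R R' id). Qed.

Definition head_avoids (c : nat) (x : seq nat) : bool :=
  if x is y :: _ then y != c else true.

Definition avoid_state (r k c : nat) (x : seq nat) : bool :=
  hanoi_state r k x && head_avoids c x.

Definition avoid_step (r k c : nat) (x y : seq nat) : Prop :=
  [/\ avoid_state r k c x, avoid_state r k c y & hanoi_move r x y].

Lemma size_hanoi_state r k x : hanoi_state r k x -> size x = k.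
Proof. by case/and3P => /eqP. Qed.

Lemma hanoi_state_cons r k a x :
  hanoi_state r k.+1 (a :: x) = (a <= r) && avoid_state r k a x.
Proof.
rewrite /avoid_state /hanoi_state /= eqSS.
case: x => [|y x] /=; first by rewrite !andbT andbC.
rewrite (eq_sym a y).
by case: (_ == k); case: (a <= r); case: (y != a); rewrite /= ?andbF ?andbT.
Qed.

Lemma avoid_state_cons r k c a x :
  avoid_state r k.+1 c (a :: x) = [&& a <= r, avoid_state r k a x & a != c].
Proof. by rewrite {1}/avoid_state hanoi_state_cons andbA. Qed.

Lemma hanoi_state_avoid r k x : hanoi_state r k x -> avoid_state r k r.+1 x.
Proof.
rewrite /avoid_state => hx; rewrite hx.
by case: x hx => //= y x /and3P [_ /andP [yr _] _]; rewrite neq_ltn ltnS yr.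
Qed.

Lemma proper_state_avoid r k x : 0 < k -> proper_state r k x = avoid_state r k 0 x.
Proof.
move=> k_gt0; rewrite /proper_state /avoid_state.
by case: x => [|y x] //; rewrite /hanoi_state /= eq_sym (gtn_eqF k_gt0).
Qed.

Lemma swap_alt_rcons p q s a : last p (swap_alt p q s) != a ->
  swap_alt p q (rcons s a) = rcons (swap_alt p q s) a.
Proof.
elim: s p q => [|y s IH] p q /=; first by rewrite eq_sym => /negbTE ->.
by case: (y == p) => //= /IH ->.
Qed.

Lemma head_avoids_rev a x0 s :
  s != [::] -> head_avoids a (rev s) = (last x0 s != a).
Proof. by case/lastP: s => // s b _; rewrite rev_rcons last_rcons. Qed.

Lemma involutionE x p q t :
  rev x = [:: p, q & t] -> involution x = rev (swap_alt p q (rev x)).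
Proof. by rewrite /involution => ->. Qed.

(* Prepending a could only lengthen the swapped final segment of x if the
   involution of x started with a. *)
Lemma involution_cons a x : 2 <= size x -> head_avoids a (involution x) ->
  involution (a :: x) = a :: involution x.
Proof.
rewrite -size_rev; case rx: (rev x) => [|p [|q t]] // _.
have rax : rev (a :: x) = [:: p, q & rcons t a] by rewrite rev_cons rx.
rewrite (involutionE rx) (involutionE rax) rev_cons rx => ha.
by rewrite swap_alt_rcons ?rev_rcons // -head_avoids_rev //= eqxx.
Qed.

Lemma hanoi_move_cons r a x y : head_avoids a y -> hanoi_move r x y ->
  hanoi_move r (a :: x) (a :: y).
Proof.
move=> ya mv; case: mv ya => [[s [b [v [-> -> vr vb sv]]]] | [x2 ->]] ya.
  left; exists (a :: s), b, v; split => //; right.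
  by case: s sv ya => [|z s] /= [] //; rewrite eq_sym.
by right; split; [apply: leqW | rewrite involution_cons].
Qed.

Lemma avoid_step_cons r k c a x y : a <= r -> a != c ->
  avoid_step r k a x y -> avoid_step r k.+1 c (a :: x) (a :: y).
Proof.
move=> ar ac [ax ay mv]; split; rewrite ?avoid_state_cons ?ar ?ax ?ay ?ac //.
by apply: hanoi_move_cons mv; case/andP: ay.
Qed.

Lemma nsteps_avoid_cons r k c a m x y : a <= r -> a != c ->
  nsteps (avoid_step r k a) m x y -> nsteps (avoid_step r k.+1 c) m (a :: x) (a :: y).
Proof. by move=> ar ac; apply: nsteps_map => x' y'; apply: avoid_step_cons. Qed.

Fixpoint alternating (p q n : nat) : seq nat :=
  if n is n'.+1 then p :: alternating q p n' else [::].

Lemma alternating_avoid_state r n p q : q <= r -> p <= r -> q != p ->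
  avoid_state r n p (alternating q p n).
Proof.
elim: n p q => [|n IH] p q qr pr qp; first by [].
by rewrite /= avoid_state_cons qr qp IH // eq_sym.
Qed.

Lemma swap_alt_alternating p q n :
  swap_alt p q (alternating p q n) = alternating q p n.
Proof. by elim: n p q => //= n IH p q; rewrite eqxx IH. Qed.

Lemma rcons_alternating p q n :
  rcons (alternating p q n) (if odd n then q else p) = alternating p q n.+1.
Proof. by elim: n p q => //= n IH p q; rewrite -IH; case: (odd n). Qed.

Lemma rev_alternating p q n :
  rev (alternating p q n) = if odd n then alternating p q n else alternating q p n.
Proof.
elim: n p q => // n IH p q; rewrite [alternating p q _]/= rev_cons IH /=.
have := rcons_alternating p q n; have := rcons_alternating q p n.
by case: (odd n) => /= Eqp Epq; rewrite ?Eqp ?Epq.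
Qed.

Lemma involution_alternating p q n :
  involution (alternating p q n.+2) = alternating q p n.+2.
Proof.
have := rev_alternating p q n.+2; case E: (odd n.+2) => ralt;
  by rewrite (involutionE ralt) ralt swap_alt_alternating rev_alternating E.
Qed.

Lemma hanoi_move_alternating r p q n : q <= r -> q != p ->
  hanoi_move r (alternating p q n.+1) (alternating q p n.+1).
Proof.
case: n => [|n] qr qp; last by right; rewrite involution_alternating.
by left; exists [::], p, q; split => //; left.
Qed.

Lemma avoid_state_connected r k c a b :
  avoid_state r k c a -> avoid_state r k c b ->
  exists2 m, m <= 2 ^ k - 1 & nsteps (avoid_step r k c) m a b.
Proof.
elim: k c a b => [|k IH] c a b.
  by case: a => [|? ?] //; case: b => [|? ?] // _ _; exists 0 => //; apply: nsteps0.
case: a => [|a1 a]; first by case/andP => /size_hanoi_state.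
case: b => [|b1 b]; first by move=> _; case/andP => /size_hanoi_state.
rewrite !avoid_state_cons => /and3P [a1r ha a1c] /and3P [b1r hb b1c].
have [eq_ab|a1b1] := eqVneq a1 b1.
  rewrite -eq_ab in hb *; have [m hm st] := IH _ _ _ ha hb.
  by exists m; first (rewrite expnS; lia); exact: nsteps_avoid_cons.
have b1a1 : b1 != a1 by rewrite eq_sym.
have [m1 hm1 st1] := IH _ _ _ ha (alternating_avoid_state k b1r a1r b1a1).
have [m2 hm2 st2] := IH _ _ _ (alternating_avoid_state k a1r b1r a1b1) hb.
have swap : avoid_step r k.+1 c (alternating a1 b1 k.+1) (alternating b1 a1 k.+1).
  split; last exact: hanoi_move_alternating.
    by rewrite avoid_state_cons a1r a1c alternating_avoid_state.
  by rewrite avoid_state_cons b1r b1c alternating_avoid_state.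
exists (m1 + (1 + m2)); first by rewrite expnS; lia.
exact: nsteps_add (nsteps_avoid_cons a1r a1c st1)
  (nstepsS swap (nsteps_avoid_cons b1r b1c st2)).
Qed.

Theorem lemma5 (r k : nat) (hr : 1 <= r) (hk : 1 <= k) :
  (forall a b : seq nat, hanoi_state r k a -> hanoi_state r k b ->
     exists2 m, m <= 2 ^ k - 1 & nsteps (game_step r k) m a b) /\
  (forall a b : seq nat, proper_state r k a -> proper_state r k b ->
     exists2 m, m <= 2 ^ k - 1 & nsteps (proper_game_step r k) m a b).
Proof.
split=> a b ha hb.
  have [m hm st] := avoid_state_connected (hanoi_state_avoid ha) (hanoi_state_avoid hb).
  exists m => //; apply: sub_nsteps st => x y [/andP [hx _] /andP [hy _] mv].
  by split.
rewrite !proper_state_avoid // in ha hb.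
have [m hm st] := avoid_state_connected ha hb.
exists m => //; apply: sub_nsteps st => x y [hx hy mv].
by split; rewrite ?proper_state_avoid.
Qed.
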